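(* Let $R$ be a ring with identity, ${}_RM$ a finitely generated semisimple left $R$-module, $\varphi:M\to M$ a nilpotent $R$-endomorphism, and $\{x_{\gamma,i}\mid\gamma\in\Gamma,1\le i\le k_\gamma\}$ a nilpotent Jordan normal base of ${}_RM$ with respect to $\varphi$, with $\Gamma$ finite. Let $\Phi:(R[t])^\Gamma\to M$, $\Phi(\mathbf f)=\sum_{\gamma\in\Gamma}f_\gamma(t)\ast x_{\gamma,1}$, \[\mathcal M(\Phi)=\{\mathbf P\in M_{\Gamma\times\Gamma}(R[t])\mid \mathbf f\mathbf P\in\ker(\Phi)\text{ for all }\mathbf f\in\ker(\Phi)\},\] \[\mathcal V(k_\gamma,\gamma\in\Gamma)=\{\mathbf P=[p_{\delta,\gamma}(t)]\in M_{\Gamma\times\Gamma}(R[t])\mid \deg(p_{\delta,\gamma}(t))\le k_\gamma-1\text{ for all }\delta,\gamma\in\Gamma\}.\] If $\psi:M\to M$ is an $R$-endomorphism with $\psi\circ\varphi=\varphi\circ\psi$, then there exists $\mathbf P\in\mathcal M(\Phi)\cap\mathcal V(k_\gamma,\gamma\in\Gamma)$ such that $\psi(\Phi(\mathbf f))=\Phi(\mathbf f\mathbf P)$ for all $\mathbf f\in(R[t])^\Gamma$.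
   Context: A nilpotent Jordan normal base of ${}_RM$ with respect to $\varphi$ is a subset $\{x_{\gamma,i}\}$ (integers $k_\gamma\ge1$) such that each $Rx_{\gamma,i}$ is simple, $M=\bigoplus_{\gamma,i}Rx_{\gamma,i}$, $\varphi(x_{\gamma,i})=x_{\gamma,i+1}$ for $i<k_\gamma$, $\varphi(x_{\gamma,k_\gamma})=0$. $R[t]$ is the polynomial ring in a commuting indeterminate; $M$ is a left $R[t]$-module via $(a_1+a_2t+\cdots+a_{n+1}t^n)\ast u=a_1u+a_2\varphi(u)+\cdots+a_{n+1}\varphi^n(u)$. Elements of $(R[t])^\Gamma$ are $1\times\Gamma$ row vectors and $\mathbf f\mathbf P$ is the matrix product. *)

From HB Require Import structures.
From mathcomp Require Import all_boot all_order all_algebra.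
Set Implicit Arguments. Unset Strict Implicit. Unset Printing Implicit Defensive.
Import Order.TTheory GRing.Theory.
Local Open Scope ring_scope.

Section ModuleNotions.
Variables (R : nzRingType) (M : lmodType R).

Definition submodule (S : M -> Prop) : Prop :=
  [/\ S 0, (forall u v, S u -> S v -> S (u + v)) & (forall (r : R) u, S u -> S (r *: u))].

Definition cyclic_submod (x : M) : M -> Prop := fun u => exists r : R, u = r *: x.

Definition simple_submod (S : M -> Prop) : Prop :=
  [/\ submodule S, (exists u, S u /\ u <> 0) &
      forall T, submodule T -> (forall u, T u -> S u) ->
        (forall u, T u -> u = 0) \/ (forall u, S u -> T u)].

Definition semisimple_mod : Prop :=
  forall S, submodule S -> exists T, submodule T /\
    (forall u, S u -> T u -> u = 0) /\
    (forall m, exists s t, [/\ S s, T t & m = s + t]).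

Definition fin_gen_mod : Prop :=
  exists s : seq M, forall m, exists c : nat -> R,
    m = \sum_(i < size s) c i *: s`_i.

Definition nilpotent_endo (phi : M -> M) : Prop :=
  exists n, forall m, iter n phi m = 0.

(* The left R[t]-module action: (a_0 + a_1 t + ... ) * u = sum a_i phi^i(u). *)
Definition pact (phi : M -> M) (p : {poly R}) (u : M) : M :=
  \sum_(i < size p) p`_i *: iter i phi u.

(* Nilpotent Jordan normal base {x_{g,i} | g in G, 1 <= i <= k g} of M w.r.t. phi
   (indices i are 1-based natural numbers; values of x outside that range are irrelevant). *)
Definition nilpotent_Jordan_base (G : finType) (k : G -> nat) (x : G -> nat -> M)
    (phi : M -> M) : Prop :=
  (forall g, (1 <= k g)%N) /\
  [/\ forall g i, (1 <= i <= k g)%N -> simple_submod (cyclic_submod (x g i)),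
      forall m, exists c : G -> nat -> R,
        m = \sum_(g : G) \sum_(1 <= i < (k g).+1) c g i *: x g i,
      forall c : G -> nat -> R,
        \sum_(g : G) \sum_(1 <= i < (k g).+1) c g i *: x g i = 0 ->
        forall g i, (1 <= i <= k g)%N -> c g i *: x g i = 0,
      forall g i, (1 <= i < k g)%N -> phi (x g i) = x g i.+1 &
      forall g, phi (x g (k g)) = 0].

End ModuleNotions.

Definition rowprod (R : nzRingType) (G : finType) (f : G -> {poly R})
    (P : G -> G -> {poly R}) : G -> {poly R} :=
  fun g => \sum_(d : G) f d * P d g.

Definition PhiMap (R : nzRingType) (M : lmodType R) (G : finType) (phi : M -> M)
    (x : G -> nat -> M) (f : G -> {poly R}) : M :=
  \sum_(g : G) pact phi (f g) (x g 1%N).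

Definition in_MPhi (R : nzRingType) (M : lmodType R) (G : finType) (phi : M -> M)
    (x : G -> nat -> M) (P : G -> G -> {poly R}) : Prop :=
  forall f : G -> {poly R}, PhiMap phi x f = 0 -> PhiMap phi x (rowprod f P) = 0.

(* V(k_g, g in G): deg p_{d,g} <= k_g - 1, i.e. size p_{d,g} <= k_g *)
Definition in_Vk (R : nzRingType) (G : finType) (k : G -> nat)
    (P : G -> G -> {poly R}) : Prop :=
  forall d g, (size (P d g) <= k g)%N.

From HB Require Import structures.
From mathcomp Require Import all_boot all_order all_algebra.
From Stdlib Require Import IndefiniteDescription.
Set Implicit Arguments. Unset Strict Implicit.
Import GRing.Theory.
Local Open Scope ring_scope.

(* Since the Jordan chains start at the x_{g,1} and M is the sum of the
   R x_{g,i}, every element of M is Phi of a row of polynomials whose g-th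
   entry has degree < k_g.  Choosing such a row for each psi(x_{d,1}) gives P.
   As psi commutes with phi it is R[t]-linear, so
   psi(Phi f) = sum_d f_d * psi(x_{d,1}) = Phi(f P); membership of P in
   M(Phi) follows because psi(0) = 0. *)

Section PolynomialAction.
Variables (R : nzRingType) (M : lmodType R) (phi : {linear M -> M}).

Lemma iter_nmod_morphism i : nmod_morphism (iter i phi).
Proof.
elim: i => [|i [IH0 IHD]] //; split=> [|u v] /=; first by rewrite IH0 linear0.
by rewrite IHD linearD.
Qed.

HB.instance Definition _ i :=
  GRing.isNmodMorphism.Build M M (iter i phi) (iter_nmod_morphism i).

Lemma iter_comm (psi : M -> M) i u :
  (forall m, psi (phi m) = phi (psi m)) -> psi (iter i phi u) = iter i phi (psi u).
Proof. by move=> psi_phi; elim: i => //= i <-. Qed.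

Lemma pact_nmod_morphism p : nmod_morphism (pact phi p).
Proof.
split=> [|u v]; rewrite /pact.
  by rewrite big1 // => i _; rewrite raddf0 scaler0.
by rewrite -big_split; apply: eq_bigr => i _; rewrite raddfD scalerDr.
Qed.

(* Only additive: for noncommutative R, [pact phi p] does not commute with
   the scalar action. *)
HB.instance Definition _ p :=
  GRing.isNmodMorphism.Build M M (pact phi p) (pact_nmod_morphism p).

Lemma pact_widen (p : {poly R}) u n : (size p <= n)%N ->
  pact phi p u = \sum_(i < n) p`_i *: iter i phi u.
Proof.
move=> le_p_n; rewrite /pact -(subnKC le_p_n) big_split_ord /=.
rewrite [X in _ + X]big1 ?addr0 // => i _.
by rewrite nth_default ?scale0r // leq_addr.
Qed.

Lemma pact0 u : pact phi 0 u = 0.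
Proof. by rewrite /pact size_poly0 big_ord0. Qed.

Lemma pactD p q u : pact phi (p + q) u = pact phi p u + pact phi q u.
Proof.
pose n := maxn (size (p + q)) (maxn (size p) (size q)).
have [le_p_n le_q_n] : (size p <= n)%N /\ (size q <= n)%N.
  by rewrite !leq_max !leqnn !orbT.
rewrite !(@pact_widen _ _ n) ?leq_maxl // -big_split /=.
by apply: eq_bigr => i _; rewrite coefD scalerDl.
Qed.

Lemma pact_sum (I : Type) (r : seq I) (F : I -> {poly R}) u :
  pact phi (\sum_(i <- r) F i) u = \sum_(i <- r) pact phi (F i) u.
Proof. by apply: (big_morph (pact phi ^~ u)) => [p q|]; rewrite ?pactD ?pact0. Qed.

Lemma pactC c u : pact phi c%:P u = c *: u.
Proof. by rewrite (@pact_widen _ _ 1) ?size_polyC ?leq_b1 // big_ord1 coefC. Qed.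

Lemma pactCM c q u : pact phi (c%:P * q) u = c *: pact phi q u.
Proof.
rewrite mul_polyC !(@pact_widen _ _ (size q)) ?size_scale_leq //.
by rewrite scaler_sumr; apply: eq_bigr => i _; rewrite coefZ scalerA.
Qed.

Lemma pactMX q u : pact phi (q * 'X) u = phi (pact phi q u).
Proof.
have le_qX_q1 : (size (q * 'X)%R <= (size q).+1)%N.
  by have [->|/size_mulX->] := eqVneq q 0; rewrite ?mul0r ?size_poly0.
rewrite (pact_widen u le_qX_q1) big_ord_recl.
rewrite coefMX eqxx scale0r add0r /pact linear_sum.
by apply: eq_bigr => i _; rewrite coefMX /= linearZ.
Qed.

Lemma pact_comm (psi : {linear M -> M}) p u :
  (forall m, psi (phi m) = phi (psi m)) -> psi (pact phi p u) = pact phi p (psi u).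
Proof.
move=> psi_phi; rewrite /pact linear_sum; apply: eq_bigr => i _.
by rewrite linearZ iter_comm.
Qed.

Lemma pactM p q u : pact phi (p * q) u = pact phi p (pact phi q u).
Proof.
elim/poly_ind: p q u => [|p c IH] q u; first by rewrite mul0r !pact0.
rewrite mulrDl !pactD pactCM pactC -mulrA -(commr_polyX q) IH !pactMX.
by rewrite [in RHS](@pact_comm phi _ _ (fun=> erefl)).
Qed.

End PolynomialAction.

Section JordanBase.
Variables (R : nzRingType) (M : lmodType R) (phi : {linear M -> M}).
Variables (G : finType) (k : G -> nat) (x : G -> nat -> M).

Lemma Jordan_chain_iter :
  (forall g i, (1 <= i < k g)%N -> phi (x g i) = x g i.+1) ->
  forall g i, (i < k g)%N -> x g i.+1 = iter i phi (x g 1).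
Proof.
move=> chain g; elim=> [|i IH] lt_i_k //=.
by rewrite -IH ?(ltnW lt_i_k) // chain.
Qed.

Lemma PhiMap_onto_Vk :
  (forall g i, (1 <= i < k g)%N -> phi (x g i) = x g i.+1) ->
  (forall m, exists c : G -> nat -> R,
     m = \sum_(g : G) \sum_(1 <= i < (k g).+1) c g i *: x g i) ->
  forall m, exists p : G -> {poly R},
    (forall g, size (p g) <= k g)%N /\ m = PhiMap phi x p.
Proof.
move=> chain span m; have [c ->] := span m.
exists (fun g => \poly_(i < k g) c g i.+1); split=> [g|]; first exact: size_poly.
apply: eq_bigr => g _; rewrite (pact_widen phi _ (size_poly _ _)).
rewrite big_add1 /= big_mkord; apply: eq_bigr => i _.
by rewrite coef_poly ltn_ord (Jordan_chain_iter chain).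
Qed.

Lemma PhiMap_comm (psi : {linear M -> M}) f :
  (forall m, psi (phi m) = phi (psi m)) ->
  psi (PhiMap phi x f) = \sum_(d : G) pact phi (f d) (psi (x d 1%N)).
Proof.
by move=> psi_phi; rewrite linear_sum; apply: eq_bigr => d _; rewrite pact_comm.
Qed.

Lemma PhiMap_rowprod f P :
  PhiMap phi x (rowprod f P) = \sum_(d : G) pact phi (f d) (PhiMap phi x (P d)).
Proof.
rewrite /PhiMap /rowprod; under eq_bigr do rewrite pact_sum.
rewrite exchange_big /=; apply: eq_bigr => d _.
by rewrite raddf_sum; apply: eq_bigr => g _; rewrite pactM.
Qed.

End JordanBase.

Theorem lemma4p3 (R : nzRingType) (M : lmodType R)
  (phi : {linear M -> M}) (G : finType) (k : G -> nat) (x : G -> nat -> M)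
  (psi : {linear M -> M}) :
  fin_gen_mod M -> semisimple_mod M -> nilpotent_endo phi ->
  nilpotent_Jordan_base k x phi ->
  (forall m, psi (phi m) = phi (psi m)) ->
  exists P : G -> G -> {poly R},
    [/\ in_MPhi phi x P, in_Vk k P &
        forall f : G -> {poly R}, psi (PhiMap phi x f) = PhiMap phi x (rowprod f P)].
Proof.
move=> _ _ _ [_ [_ span _ chain _]] psi_phi.
have /functional_choice[P rowP] := fun d =>
  PhiMap_onto_Vk chain span (psi (x d 1%N)).
have psi_PhiMap f : psi (PhiMap phi x f) = PhiMap phi x (rowprod f P).
  rewrite PhiMap_comm // PhiMap_rowprod.
  by apply: eq_bigr => d _; rewrite -(proj2 (rowP d)).
exists P; split=> // [f Phi_f0 | d g]; last exact: (proj1 (rowP d)).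
by rewrite -psi_PhiMap Phi_f0 linear0.
Qed.
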